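(* Let $\mathfrak{g}_i$, $i=1,\dots,r$, be a family of metric Lie algebras sharing the same underlying euclidean vector space $W$ (each bracket $[-,-]_i$ being invariant with respect to the euclidean inner product of $W$), and let $[-,-]_i$ denote the Lie bracket of $\mathfrak{g}_i$. Suppose that for all $x,y,z\in W$ and all $i,j$, $$[x, [y,z]_i]_j = [[x,y]_j,z]_i + [y,[x,z]_j]_i \qquad\text{and}\qquad [[x,y]_i,z]_j = [[x,y]_j,z]_i.$$ Then there is an orthogonal decomposition $W = W_0 \oplus \bigoplus_{\alpha =1}^N W_\alpha$ such that $$[x,y]_i = \begin{cases} 0 & \text{if } x,y\in W_0,\\ \kappa_i^\alpha [x,y] & \text{if } x,y \in W_\alpha,\end{cases}$$ for some $\kappa_i^\alpha \in \mathbb{R}$, where $[-,-]$ are the Lie brackets of a semisimple Lie algebra $\mathfrak{g}$ with underlying vector space $\bigoplus_{\alpha =1}^N W_\alpha$.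
   Context: A metric Lie algebra here is a Lie algebra structure on $W$ for which the given inner product $\langle-,-\rangle$ is ad-invariant: $\langle [x,y]_i,z\rangle = \langle x,[y,z]_i\rangle$. *)

(* Euclidean space W = 'rV[R]_n with the standard inner product. *)
From HB Require Import structures.
From mathcomp Require Import all_boot all_order all_algebra.
From mathcomp Require Import reals.
Set Implicit Arguments. Unset Strict Implicit. Unset Printing Implicit Defensive.
Import Order.TTheory GRing.Theory Num.Theory.
Local Open Scope ring_scope.

Section Defs.
Variables (R : realType) (n : nat).
Notation vec := 'rV[R]_n.

Definition dot (u v : vec) : R := \sum_(k < n) u 0 k * v 0 k.

Definition is_lie_bracket (b : vec -> vec -> vec) : Prop :=
  (forall a x y z, b (a *: x + y) z = a *: b x z + b y z) /\
  (forall a x y z, b x (a *: y + z) = a *: b x y + b x z) /\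
  (forall x, b x x = 0) /\
  (forall x y z, b x (b y z) + b y (b z x) + b z (b x y) = 0).

Definition is_metric (b : vec -> vec -> vec) : Prop :=
  forall x y z, dot (b x y) z = dot x (b y z).

(* Subspaces of W are represented by row spaces of square matrices (mxalgebra). *)
Definition lie_on (U : 'M[R]_n) (b : vec -> vec -> vec) : Prop :=
  (forall x y, (x <= U)%MS -> (y <= U)%MS -> (b x y <= U)%MS) /\
  (forall a x y z, (x <= U)%MS -> (y <= U)%MS -> (z <= U)%MS ->
     b (a *: x + y) z = a *: b x z + b y z) /\
  (forall a x y z, (x <= U)%MS -> (y <= U)%MS -> (z <= U)%MS ->
     b x (a *: y + z) = a *: b x y + b x z) /\
  (forall x, (x <= U)%MS -> b x x = 0) /\
  (forall x y z, (x <= U)%MS -> (y <= U)%MS -> (z <= U)%MS ->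
     b x (b y z) + b y (b z x) + b z (b x y) = 0).

Definition ideal_of (U : 'M[R]_n) (b : vec -> vec -> vec) (S : 'M[R]_n) : Prop :=
  (S <= U)%MS /\ forall x y, (x <= S)%MS -> (y <= U)%MS -> (b x y <= S)%MS.

Definition derived (b : vec -> vec -> vec) (S : 'M[R]_n) : 'M[R]_n :=
  (\sum_(i < n) \sum_(j < n) <<b (row i S) (row j S)>>)%MS.

Definition solvable_sub (b : vec -> vec -> vec) (S : 'M[R]_n) : Prop :=
  exists k : nat, (iter k (derived b) S <= (0 : 'M[R]_n))%MS.

Definition semisimple_on (U : 'M[R]_n) (b : vec -> vec -> vec) : Prop :=
  lie_on U b /\
  forall S, ideal_of U b S -> solvable_sub b S -> (S <= (0 : 'M[R]_n))%MS.

End Defs.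

(* Since every bracket is skew-adjoint, the orthogonal complement of a common
   ideal (a subspace stable under every ad^i_x) is again one, so W splits
   orthogonally into the common centre W_0 and minimal common ideals W_a.
   On each W_a some bracket [-,-]_i is nonzero; the derivation identity makes
   (W_a, [-,-]_i) centreless, hence perfect, and the second identity then makes
   [x,y]_i |-> [x,y]_j a well-defined symmetric map commuting with every ad^l_x.
   An eigenspace of it is a common ideal, so the map is a scalar kappa_j^a
   (Schur's lemma). The orthogonal sum of the chosen brackets on the W_a is
   metric and centreless, so each of its ideals is perfect and none but 0 is
   solvable. *)

From HB Require Import structures.
From mathcomp Require Import all_boot all_order all_algebra.
From mathcomp Require Import reals.
From mathcomp.real_closed Require Import complex.
From mathcomp Require Import zify ring.
From Stdlib Require Import Classical.
Set Implicit Arguments. Unset Strict Implicit. Unset Printing Implicit Defensive.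
Import Order.TTheory GRing.Theory Num.Theory.
Local Open Scope ring_scope.

Section RowSpaces.
Variables (F : fieldType) (n : nat).
Implicit Types (x y : 'rV[F]_n).

Lemma rowspace_ind m (M : 'M[F]_(m, n)) (P : 'rV[F]_n -> Prop) :
  P 0 -> (forall a x y, P x -> P y -> P (a *: x + y)) ->
  (forall k, P (row k M)) -> forall x, (x <= M)%MS -> P x.
Proof.
move=> P0 Plin Prow x /submxP [c ->]; rewrite mulmx_sum_row.
apply: (big_ind P) => // [u v Pu Pv|k _]; first by rewrite -[u]scale1r; apply: Plin.
by rewrite -[_ *: _]addr0; apply: Plin.
Qed.

Lemma sumsmx_ind (I : finType) (Q : pred I) (A : I -> 'M[F]_n) (P : 'rV[F]_n -> Prop) :
  P 0 -> (forall x y, P x -> P y -> P (x + y)) ->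
  (forall k, Q k -> forall x, (x <= A k)%MS -> P x) ->
  forall x, (x <= \sum_(k | Q k) A k)%MS -> P x.
Proof.
move=> P0 PD PA x /sub_sumsmxP [u ->].
by apply: (big_ind P) => // k Qk; apply: (PA k Qk); apply: submxMl.
Qed.

(* Enlarge a matrix whose rows satisfy P until its row space contains every
   vector satisfying P; each step raises the rank. *)
Lemma linear_pred_rowspace (P : 'rV[F]_n -> Prop) :
  P 0 -> (forall a x y, P x -> P y -> P (a *: x + y)) ->
  exists S : 'M[F]_n, forall x, (x <= S)%MS <-> P x.
Proof.
move=> P0 Plin; have rowsP A : (forall k, P (row k A)) -> forall x, (x <= A)%MS -> P x.
  by move=> PA; apply: rowspace_ind.
suff: forall d (A : 'M[F]_n), (n - \rank A <= d)%N -> (forall k, P (row k A)) ->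
    exists S : 'M[F]_n, forall x, (x <= S)%MS <-> P x.
  by move=> /(_ n 0); apply=> [|k]; [rewrite leq_subr | rewrite row0].
elim=> [|d IH] A rkA PA.
  exists A => x; split=> [|_]; first exact: rowsP.
  have fullA : row_full A by rewrite /row_full eqn_leq rank_leq_col; lia.
  by apply: submx_trans (submx1 x) _; rewrite sub1mx.
have [allA|] := classic (forall x, P x -> (x <= A)%MS).
  by exists A => x; split; [apply: rowsP | apply: allA].
move=> /not_all_ex_not [x /(imply_to_and (P x)) [Px xNA]].
pose B : 'M[F]_n := <<(A + x)%MS>>%MS.
have rkAB : (\rank A < \rank B)%N.
  rewrite rank_ltmx // ltmxE /B !genmxE addsmxSl /=.
  by apply/negP => AxA; apply: xNA; exact: submx_trans (addsmxSr A x) AxA.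
apply: (IH B) => [|k]; first by have := rank_leq_col B; lia.
have /sub_addsmxP [[u1 u2] /= ->] : (row k B <= A + x)%MS.
  by rewrite -(genmxE (A + x)%MS) row_sub.
rewrite -[u2 *m x]addr0 -[u1 *m A]scale1r [u2]mx11_scalar mul_scalar_mx.
by apply: (Plin); [exact: rowsP (submxMl _ _) | apply: (Plin)].
Qed.

Lemma solve_mulmx m p q (A : 'M[F]_(m, p)) (B : 'M[F]_(m, q)) :
  (forall c : 'rV_m, c *m A = 0 -> c *m B = 0) -> exists X, A *m X = B.
Proof.
move=> kerAB; pose K := (cokermx A^T)^T.
have KA : K *m A = 0 by rewrite -[A]trmxK -trmx_mul mulmx_coker trmx0.
have KB : K *m B = 0.
  by apply/row_matrixP => k; rewrite row_mul row0 kerAB // -row_mul KA row0.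
have BA : (B^T <= A^T)%MS by rewrite submxE -[cokermx _]trmxK -trmx_mul KB trmx0.
exists ((pinvmx A^T)^T *m B).
by apply: trmx_inj; rewrite trmx_mul [(_ *m B)^T]trmx_mul trmxK mulmxKpV.
Qed.

End RowSpaces.

Section Euclidean.
Variables (R : realType) (n : nat).
Implicit Types (x y z u v w : 'rV[R]_n) (U V : 'M[R]_n).

Lemma dotC u v : dot u v = dot v u.
Proof. by apply: eq_bigr => k _; rewrite mulrC. Qed.

Lemma dotDl u v w : dot (u + v) w = dot u w + dot v w.
Proof. by rewrite /dot -big_split; apply: eq_bigr => k _; rewrite mxE mulrDl. Qed.

Lemma dotZl a u w : dot (a *: u) w = a * dot u w.
Proof. by rewrite /dot mulr_sumr; apply: eq_bigr => k _; rewrite mxE mulrA. Qed.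

Lemma dot0l w : dot 0 w = 0.
Proof. by rewrite -(scale0r 0) dotZl mul0r. Qed.

Lemma dotNl u w : dot (- u) w = - dot u w.
Proof. by rewrite -scaleN1r dotZl mulN1r. Qed.

Lemma dotDr u v w : dot w (u + v) = dot w u + dot w v.
Proof. by rewrite dotC dotDl !(dotC w). Qed.

Lemma dotZr a u w : dot w (a *: u) = a * dot w u.
Proof. by rewrite dotC dotZl dotC. Qed.

Lemma dot0r w : dot w 0 = 0.
Proof. by rewrite dotC dot0l. Qed.

Lemma dot_suml (I : Type) (s : seq I) (P : pred I) (F : I -> 'rV[R]_n) z :
  dot (\sum_(k <- s | P k) F k) z = \sum_(k <- s | P k) dot (F k) z.
Proof. exact: (big_morph (fun x => dot x z) (fun x y => dotDl x y z) (dot0l z)). Qed.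

Lemma dot_sumr (I : Type) (s : seq I) (P : pred I) (F : I -> 'rV[R]_n) z :
  dot z (\sum_(k <- s | P k) F k) = \sum_(k <- s | P k) dot z (F k).
Proof. by rewrite dotC dot_suml; apply: eq_bigr => k _; rewrite dotC. Qed.

Lemma dot_ge0 u : 0 <= dot u u.
Proof. by rewrite sumr_ge0 // => k _; rewrite -expr2 sqr_ge0. Qed.

Lemma dot_eq0 u : dot u u = 0 -> u = 0.
Proof.
move=> /eqP; rewrite psumr_eq0 => [/allP u0|k _]; last by rewrite -expr2 sqr_ge0.
apply/rowP => k; rewrite mxE; have := u0 k (mem_index_enum k).
by rewrite -expr2 sqrf_eq0 => /eqP.
Qed.

Definition orthm U : 'M[R]_n := kermx U^T.

Lemma orthmP U x : reflect (forall y, (y <= U)%MS -> dot x y = 0) (x <= orthm U)%MS.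
Proof.
have dot_row k : (x *m U^T) 0 k = dot x (row k U).
  by rewrite mxE; apply: eq_bigr => j _; rewrite !mxE.
apply: (iffP sub_kermxP) => [xU0|xU].
  apply: rowspace_ind => [|a y z xy xz|k]; first exact: dot0r.
    by rewrite dotDr dotZr xy xz mulr0 addr0.
  by rewrite -dot_row xU0 mxE.
by apply/rowP => k; rewrite dot_row mxE xU ?row_sub.
Qed.

Lemma orthmC U V : (U <= orthm V)%MS = (V <= orthm U)%MS.
Proof. by rewrite !sub_kermx -trmx_eq0 trmx_mul trmxK. Qed.

Lemma submx_orthm_eq0 U x : (x <= U)%MS -> (x <= orthm U)%MS -> x = 0.
Proof. by move=> xU /orthmP /(_ x xU) /dot_eq0. Qed.

Lemma capmx_orthm U : (U :&: orthm U)%MS = 0.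
Proof.
apply/eqP; rewrite -submx0; apply/row_subP => k.
have := row_sub k (U :&: orthm U)%MS; rewrite sub_capmx => /andP [kU kUo].
by rewrite (submx_orthm_eq0 kU kUo) sub0mx.
Qed.

Lemma addsmx_orthm U : (1%:M <= U + orthm U)%MS.
Proof.
rewrite sub1mx /row_full mxrank_disjoint_sum ?capmx_orthm // mxrank_ker mxrank_tr.
by have := rank_leq_col U; lia.
Qed.

Lemma orthm_decomp U x : exists y z, [/\ x = y + z, (y <= U)%MS & (z <= orthm U)%MS].
Proof.
have /sub_addsmxP [[u1 u2] /= ->] := submx_trans (submx1 x) (addsmx_orthm U).
by exists (u1 *m U), (u2 *m orthm U); rewrite !submxMl.
Qed.

Definition oproj U := proj_mx U (orthm U).

Lemma oproj_sub U x : (x *m oproj U <= U)%MS.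
Proof. exact: proj_mx_sub. Qed.

Lemma oproj_id U x : (x <= U)%MS -> x *m oproj U = x.
Proof. by move=> xU; rewrite proj_mx_id // capmx_orthm. Qed.

Lemma oproj0 U x : (x <= orthm U)%MS -> x *m oproj U = 0.
Proof. by move=> xUo; rewrite proj_mx_0 // capmx_orthm. Qed.

Lemma dot_oproj U x y : (y <= U)%MS -> dot (x *m oproj U) y = dot x y.
Proof.
move=> yU; have xU : (x <= U + orthm U)%MS := submx_trans (submx1 x) (addsmx_orthm U).
have /orthmP /(_ y yU) := proj_mx_compl_sub xU.
by rewrite dotDl dotNl => /eqP; rewrite subr_eq0 => /eqP ->.
Qed.

End Euclidean.

Section RealEigenvector.
Variables (R : realType) (n : nat).
Local Notation Re := (@complex.Re R).
Local Notation Im := (@complex.Im R).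

(* The real and imaginary parts u, w of a complex eigenvector of X on V satisfy
   u X = a u - b w and w X = b u + a w; symmetry forces b (|u|^2 + |w|^2) = 0. *)
Lemma symmetric_eigenvector (X V : 'M[R]_n) :
  (V *m X <= V)%MS ->
  (forall u w, (u <= V)%MS -> (w <= V)%MS -> dot (u *m X) w = dot u (w *m X)) ->
  V != 0 -> exists a (v : 'rV[R]_n), [/\ (v <= V)%MS, v != 0 & v *m X = a *: v].
Proof.
move=> VX Xsym V0; pose B := row_base V.
have ReM (z w : R[i]) : Re (z * w) = Re z * Re w - Im z * Im w.
  by case: z => ? ?; case: w => ? ?; reflexivity.
have ImM (z w : R[i]) : Im (z * w) = Re z * Im w + Im z * Re w.
  by case: z => ? ?; case: w => ? ?; reflexivity.
have Re_sum (I : Type) (s : seq I) (f : I -> R[i]) :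
    Re (\sum_(k <- s) f k) = \sum_(k <- s) Re (f k).
  by apply: big_morph => [[? ?] [? ?]|].
have Im_sum (I : Type) (s : seq I) (f : I -> R[i]) :
    Im (\sum_(k <- s) f k) = \sum_(k <- s) Im (f k).
  by apply: big_morph => [[? ?] [? ?]|].
pose F := B *m X *m pinvmx B.
have FB : F *m B = B *m X.
  by rewrite mulmxKpV // (eqmxMr X (eq_row_base V)) (eq_row_base V).
have rkV : (0 < \rank V)%N by rewrite lt0n mxrank_eq0.
have [lam /eigenvalueP [v vF v0]] := Theorem7' (map_mx (real_complex R) F) rkV.
pose cr := map_mx Re v; pose ci := map_mx Im v.
have crF : cr *m F = Re lam *: cr - Im lam *: ci.
  apply/rowP => j; rewrite !mxE; transitivity (Re ((v *m map_mx (real_complex R) F) 0 j)).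
    by rewrite mxE Re_sum; apply: eq_bigr => l _; rewrite !mxE ReM /= mulr0 subr0.
  by rewrite vF !mxE ReM.
have ciF : ci *m F = Im lam *: cr + Re lam *: ci.
  apply/rowP => j; rewrite !mxE; transitivity (Im ((v *m map_mx (real_complex R) F) 0 j)).
    by rewrite mxE Im_sum; apply: eq_bigr => l _; rewrite !mxE ImM /= mulr0 add0r.
  by rewrite vF !mxE ImM addrC.
pose u := cr *m B; pose w := ci *m B.
have uV : (u <= V)%MS by rewrite -(eq_row_base V) submxMl.
have wV : (w <= V)%MS by rewrite -(eq_row_base V) submxMl.
have uX : u *m X = Re lam *: u - Im lam *: w.
  by rewrite -mulmxA -FB mulmxA crF mulmxBl -!scalemxAl.
have wX : w *m X = Im lam *: u + Re lam *: w.
  by rewrite -mulmxA -FB mulmxA ciF mulmxDl -!scalemxAl.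
have uw : (u != 0) || (w != 0).
  rewrite -negb_and; apply: contra v0 => /andP [u0 w0].
  rewrite !mulmx_free_eq0 ?row_base_free // in u0 w0.
  move: u0 w0 => /eqP /rowP cr0 /eqP /rowP ci0; apply/eqP/rowP => j.
  by move: (cr0 j) (ci0 j); rewrite !mxE; case: (v 0 j) => ? ? /= -> ->.
have sym_uw : Im lam * (dot u u + dot w w) = 0.
  have := Xsym u w uV wV; rewrite uX wX dotDl dotNl !dotZl dotDr !dotZr => E.
  transitivity (Im lam * dot u u + Re lam * dot u w
                - (Re lam * dot u w - Im lam * dot w w)); first by ring.
  by rewrite E subrr.
have lam_real : Im lam = 0.
  move/eqP: sym_uw; rewrite mulf_eq0 paddr_eq0 ?dot_ge0 // => /orP [/eqP //|].
  by case/andP => /eqP /dot_eq0 u0 /eqP /dot_eq0 w0; rewrite u0 w0 eqxx in uw.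
exists (Re lam); case/orP: uw => [u0|w0]; [exists u | exists w]; split => //.
  by rewrite uX lam_real scale0r subr0.
by rewrite wX lam_real scale0r add0r.
Qed.

End RealEigenvector.

Section LieBracket.
Variables (R : realType) (n : nat) (b : 'rV[R]_n -> 'rV[R]_n -> 'rV[R]_n).
Hypothesis lie_b : is_lie_bracket b.
Implicit Types (x y z : 'rV[R]_n) (S T : 'M[R]_n).

Lemma lieDl x y z : b (x + y) z = b x z + b y z.
Proof. by case: lie_b => linl _; have := linl 1 x y z; rewrite !scale1r. Qed.

Lemma lieDr x y z : b x (y + z) = b x y + b x z.
Proof. by case: lie_b => _ [linr _]; have := linr 1 x y z; rewrite !scale1r. Qed.

Lemma lie0l y : b 0 y = 0.
Proof. by apply: (addrI (b 0 y)); rewrite -lieDl !addr0. Qed.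

Lemma lie0r x : b x 0 = 0.
Proof. by apply: (addrI (b x 0)); rewrite -lieDr !addr0. Qed.

Lemma lieZl a x z : b (a *: x) z = a *: b x z.
Proof. by case: lie_b => linl _; have := linl a x 0 z; rewrite !addr0 lie0l addr0. Qed.

Lemma lieZr a x z : b x (a *: z) = a *: b x z.
Proof. by case: lie_b => _ [linr _]; have := linr a x z 0; rewrite !addr0 lie0r addr0. Qed.

Lemma lie_anti x y : b x y = - b y x.
Proof.
case: lie_b => _ [_ [alt _]]; have := alt (x + y).
by rewrite lieDl !lieDr !alt add0r addr0 => /eqP; rewrite addr_eq0 => /eqP.
Qed.

Lemma lie_suml (I : Type) (s : seq I) (P : pred I) (F : I -> 'rV[R]_n) z :
  b (\sum_(k <- s | P k) F k) z = \sum_(k <- s | P k) b (F k) z.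
Proof. exact: (big_morph (b^~ z) (fun x y => lieDl x y z) (lie0l z)). Qed.

Lemma lie_rows_sub S m (T : 'M[R]_(m, n)) :
  (forall i j, (b (row i S) (row j S) <= T)%MS) ->
  forall x y, (x <= S)%MS -> (y <= S)%MS -> (b x y <= T)%MS.
Proof.
move=> rowsT x y xS; move: x xS y.
apply: rowspace_ind => [y _|a x1 x2 IH1 IH2 y yS|i]; first by rewrite lie0l sub0mx.
  by rewrite lieDl lieZl addmx_sub ?scalemx_sub ?IH1 ?IH2.
apply: rowspace_ind => [|a y1 y2 IH1 IH2|j]; first by rewrite lie0r sub0mx.
  by rewrite lieDr lieZr addmx_sub ?scalemx_sub.
exact: rowsT.
Qed.

Lemma derived_sup S x y : (x <= S)%MS -> (y <= S)%MS -> (b x y <= derived b S)%MS.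
Proof.
move: x y; apply: lie_rows_sub => i j.
by apply: (sumsmx_sup i) => //; apply: (sumsmx_sup j) => //; rewrite genmxE.
Qed.

Lemma derived_sub S m (T : 'M[R]_(m, n)) :
  (forall x y, (x <= S)%MS -> (y <= S)%MS -> (b x y <= T)%MS) -> (derived b S <= T)%MS.
Proof.
move=> ST; apply/sumsmx_subP => i _; apply/sumsmx_subP => j _.
by rewrite genmxE ST ?row_sub.
Qed.

(* The brackets of all pairs of rows of S, as the rows of one matrix, so that
   linear combinations of brackets are the products [c *m bracket_mx S]. *)
Definition bracket_mx S : 'M[R]_(#|{: 'I_n * 'I_n}|, n) :=
  \matrix_(k, l) b (row (enum_val k).1 S) (row (enum_val k).2 S) 0 l.

Lemma row_bracket_mx S k :
  row k (bracket_mx S) = b (row (enum_val k).1 S) (row (enum_val k).2 S).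
Proof. by apply/rowP => l; rewrite !mxE. Qed.

Lemma mulmx_bracket_mx S c :
  c *m bracket_mx S = \sum_k c 0 k *: b (row (enum_val k).1 S) (row (enum_val k).2 S).
Proof. by rewrite mulmx_sum_row; apply: eq_bigr => k _; rewrite row_bracket_mx. Qed.

Lemma bracket_mx_sup S x y : (x <= S)%MS -> (y <= S)%MS -> (b x y <= bracket_mx S)%MS.
Proof.
move: x y; apply: lie_rows_sub => i j.
have -> : b (row i S) (row j S) = row (enum_rank (i, j)) (bracket_mx S).
  by rewrite row_bracket_mx enum_rankK.
exact: row_sub.
Qed.

Lemma bracket_mx_sub S T :
  (forall x y, (x <= S)%MS -> (y <= S)%MS -> (b x y <= T)%MS) -> (bracket_mx S <= T)%MS.
Proof. by move=> ST; apply/row_subP => k; rewrite row_bracket_mx ST ?row_sub. Qed.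

End LieBracket.

Section MetricLie.
Variables (R : realType) (n : nat) (b : 'rV[R]_n -> 'rV[R]_n -> 'rV[R]_n).
Hypotheses (lie_b : is_lie_bracket b) (met_b : is_metric b).
Implicit Types (x y z : 'rV[R]_n) (U S : 'M[R]_n).

Lemma metric_anti x y v : dot (b x y) v = - dot y (b x v).
Proof. by rewrite (lie_anti lie_b) dotNl met_b. Qed.

(* The part of S orthogonal to [S, S] is central in U: invariance moves any
   bracket with it onto a bracket landing in [S, S] or in S itself. *)
Lemma ideal_perfect U S : ideal_of U b S ->
  (forall z, (z <= S)%MS -> (forall y, (y <= U)%MS -> b z y = 0) -> z = 0) ->
  (S <= derived b S)%MS.
Proof.
move=> [SU Sid] centerless.
have DS : (derived b S <= S)%MS.
  by apply: derived_sub => x y xS yS; apply: Sid => //; apply: submx_trans yS SU.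
have orth_S w : (w <= S)%MS -> (forall s, (s <= S)%MS -> dot w s = 0) -> w = 0.
  by move=> wS wSo; apply: dot_eq0; apply: wSo.
apply/row_subP => k; have [d [e [ke dD eDo]]] := orthm_decomp (derived b S) (row k S).
have eS : (e <= S)%MS.
  by rewrite -(addKr d e) -ke addmx_sub ?eqmx_opp ?row_sub // (submx_trans dD DS).
suff e0 : e = 0 by rewrite ke e0 addr0.
apply: centerless => // y yU; have [y1 [y2 [yE y1S y2So]]] := orthm_decomp S y.
have y1U := submx_trans y1S SU.
have y2U : (y2 <= U)%MS by rewrite -(addKr y1 y2) -yE addmx_sub ?eqmx_opp.
rewrite yE (lieDr lie_b).
have -> : b e y1 = 0.
  apply: orth_S => [|s sS]; first exact: Sid.
  by rewrite met_b; move/orthmP: eDo; apply; apply: (derived_sup lie_b).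
have -> : b e y2 = 0.
  apply: orth_S => [|s sS]; first exact: Sid.
  rewrite metric_anti; move/orthmP: y2So => -> //; rewrite ?oppr0 //.
  by rewrite Sid ?(submx_trans sS SU).
by rewrite addr0.
Qed.

Lemma centerless_semisimple U :
  (forall x y, (x <= U)%MS -> (y <= U)%MS -> (b x y <= U)%MS) ->
  (forall z, (z <= U)%MS -> (forall y, (y <= U)%MS -> b z y = 0) -> z = 0) ->
  semisimple_on U b.
Proof.
move=> closedU centerless; split.
  by case: lie_b => linl [linr [alt jac]]; do !split=> *; rewrite ?closedU.
move=> S idS [k Sk]; suff SD : (S <= iter k (derived b) S)%MS by apply: submx_trans SD Sk.
elim: k {Sk} => [|k IH] //=.
apply: submx_trans (ideal_perfect idS _) _ => [z zS|].
  by move=> zc; apply: centerless => //; case: idS => SU _; apply: submx_trans zS SU.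
apply: derived_sub => x y xS yS.
by apply: (derived_sup lie_b); [exact: submx_trans xS IH | exact: submx_trans yS IH].
Qed.

End MetricLie.

Section OrthogonalSum.
Variables (R : realType) (n m : nat) (Vs : 'I_m -> 'M[R]_n).
Variable bk : 'I_m -> 'rV[R]_n -> 'rV[R]_n -> 'rV[R]_n.
Hypothesis lie_bk : forall k, is_lie_bracket (bk k).
Hypothesis met_bk : forall k, is_metric (bk k).
Hypothesis ideal_bk : forall k x y, (y <= Vs k)%MS -> (bk k x y <= Vs k)%MS.
Hypothesis orth_Vs : forall k l, k != l -> (Vs k <= orthm (Vs l))%MS.
Implicit Types (x y z : 'rV[R]_n).

Definition sum_bracket x y := \sum_k bk k (x *m oproj (Vs k)) (y *m oproj (Vs k)).

Lemma ideal_bk_l k x y : (x <= Vs k)%MS -> (bk k x y <= Vs k)%MS.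
Proof. by move=> xV; rewrite (lie_anti (lie_bk k)) eqmx_opp ideal_bk. Qed.

Lemma oproj_orth k l x : k != l -> (x <= Vs k)%MS -> x *m oproj (Vs l) = 0.
Proof. by move=> kl xV; apply/oproj0/(submx_trans xV); apply: orth_Vs. Qed.

Lemma sum_bracket_oproj l x y :
  sum_bracket x y *m oproj (Vs l) = bk l (x *m oproj (Vs l)) (y *m oproj (Vs l)).
Proof.
rewrite mulmx_suml (bigD1 l) //= oproj_id ?ideal_bk ?oproj_sub // big1 ?addr0 //.
by move=> k kl; rewrite (oproj_orth kl) ?ideal_bk ?oproj_sub.
Qed.

Lemma sum_bracket_lie : is_lie_bracket sum_bracket.
Proof.
do ![split] => [a x y z|a x y z|x|x y z]; rewrite /sum_bracket.
- rewrite scaler_sumr -big_split; apply: eq_bigr => k _ /=.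
  by rewrite mulmxDl -scalemxAl (lieDl (lie_bk k)) (lieZl (lie_bk k)).
- rewrite scaler_sumr -big_split; apply: eq_bigr => k _ /=.
  by rewrite mulmxDl -scalemxAl (lieDr (lie_bk k)) (lieZr (lie_bk k)).
- by rewrite big1 // => k _; case: (lie_bk k) => _ [_ []].
rewrite -!big_split big1 //= => k _; rewrite !sum_bracket_oproj.
by case: (lie_bk k) => _ [_ [_]].
Qed.

Lemma sum_bracket_metric : is_metric sum_bracket.
Proof.
move=> x y z; rewrite /sum_bracket dot_suml dot_sumr; apply: eq_bigr => k _.
have xyV : (bk k (x *m oproj (Vs k)) (y *m oproj (Vs k)) <= Vs k)%MS.
  by rewrite ideal_bk_l ?oproj_sub.
rewrite dotC -(@dot_oproj _ _ (Vs k) z _ xyV) dotC met_bk dot_oproj //.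
by rewrite ideal_bk ?oproj_sub.
Qed.

Lemma sum_bracket_sub x y : (sum_bracket x y <= \sum_k Vs k)%MS.
Proof. by apply: summx_sub => k _; apply: (sumsmx_sup k); rewrite ?ideal_bk ?oproj_sub. Qed.

Lemma sum_bracket_l k x y : (x <= Vs k)%MS -> sum_bracket x y = bk k x (y *m oproj (Vs k)).
Proof.
move=> xV; rewrite /sum_bracket (bigD1 k) //= oproj_id // big1 ?addr0 // => l lk.
by rewrite (@oproj_orth k l x) 1?eq_sym // (lie0l (lie_bk l)).
Qed.

Lemma sum_bracket_r k x y : (y <= Vs k)%MS -> sum_bracket x y = bk k (x *m oproj (Vs k)) y.
Proof.
move=> yV; rewrite /sum_bracket (bigD1 k) //= [y *m _]oproj_id // big1 ?addr0 // => l lk.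
by rewrite (@oproj_orth k l y) 1?eq_sym // (lie0r (lie_bk l)).
Qed.

Lemma sum_bracket_in k x y : (x <= Vs k)%MS -> (y <= Vs k)%MS -> sum_bracket x y = bk k x y.
Proof. by move=> xV yV; rewrite (sum_bracket_l _ xV) oproj_id. Qed.

Lemma sum_bracket_ideal k : ideal_of (\sum_k Vs k)%MS sum_bracket (Vs k).
Proof.
split=> [|x y xV _]; first exact: (sumsmx_sup k).
by rewrite (sum_bracket_l _ xV) ideal_bk_l.
Qed.

Hypothesis centerless_bk : forall k z,
  (z <= Vs k)%MS -> (forall y, (y <= Vs k)%MS -> bk k z y = 0) -> z = 0.

Lemma sum_bracket_centerless z : (z <= \sum_k Vs k)%MS ->
  (forall y, (y <= \sum_k Vs k)%MS -> sum_bracket z y = 0) -> z = 0.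
Proof.
move=> zU zc; apply: (submx_orthm_eq0 zU); apply/orthmP.
apply: (@sumsmx_ind _ _ _ _ _ (fun y => dot z y = 0)) => [|y1 y2 z1 z2|k _ v vV].
- exact: dot0r.
- by rewrite dotDr z1 z2 addr0.
have zk0 : z *m oproj (Vs k) = 0.
  apply: centerless_bk => [|y yV]; first exact: oproj_sub.
  by rewrite -sum_bracket_r // zc // (sumsmx_sup k).
by rewrite -(dot_oproj _ vV) zk0 dot0l.
Qed.

Lemma sum_bracket_semisimple : semisimple_on (\sum_k Vs k)%MS sum_bracket.
Proof.
apply: (centerless_semisimple sum_bracket_lie sum_bracket_metric) => [x y _ _|].
  exact: sum_bracket_sub.
exact: sum_bracket_centerless.
Qed.

End OrthogonalSum.

Section CompatibleBrackets.
Variables (R : realType) (n r : nat) (br : 'I_r -> 'rV[R]_n -> 'rV[R]_n -> 'rV[R]_n).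
Hypothesis Hlie : forall i, is_lie_bracket (br i).
Hypothesis Hmet : forall i, is_metric (br i).
Hypothesis Hder : forall (i j : 'I_r) (x y z : 'rV[R]_n),
  br j x (br i y z) = br i (br j x y) z + br i y (br j x z).
Hypothesis Hcom : forall (i j : 'I_r) (x y z : 'rV[R]_n),
  br j (br i x y) z = br i (br j x y) z.
Implicit Types (x y z u v w : 'rV[R]_n) (U V : 'M[R]_n).

Let brDl i := lieDl (Hlie i).
Let brDr i := lieDr (Hlie i).
Let brZl i := lieZl (Hlie i).
Let brZr i := lieZr (Hlie i).
Let br0l i := lie0l (Hlie i).
Let br0r i := lie0r (Hlie i).
Let br_anti i := lie_anti (Hlie i).

Definition common_ideal V := forall i x y, (y <= V)%MS -> (br i x y <= V)%MS.

Definition minimal_ideal V := [/\ V != 0, common_ideal V &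
  forall U, common_ideal U -> (U <= V)%MS -> (U == 0) || (V <= U)%MS].

Lemma common_ideal_orthm V : common_ideal V -> common_ideal (orthm V).
Proof.
move=> idV i x y /orthmP yVo; apply/orthmP => v vV.
by rewrite metric_anti ?yVo ?oppr0 ?idV.
Qed.

Lemma common_ideal_cap U V : common_ideal U -> common_ideal V -> common_ideal (U :&: V)%MS.
Proof. by move=> idU idV i x y; rewrite !sub_capmx => /andP [yU yV]; rewrite idU ?idV. Qed.

Lemma bracket_orthm0 V i x y :
  common_ideal V -> (x <= orthm V)%MS -> (y <= V)%MS -> br i x y = 0.
Proof.
move=> idV xVo yV; apply: (@submx_orthm_eq0 _ _ V); first exact: idV.
by rewrite br_anti eqmx_opp common_ideal_orthm.
Qed.

Lemma exists_minimal_ideal U : common_ideal U -> U != 0 ->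
  exists2 V, minimal_ideal V & (V <= U)%MS.
Proof.
move: {2}(\rank U).+1 (ltnSn (\rank U)) => k; elim: k U => // k IH U rkU idU U0.
have [minU|nminU] := classic (minimal_ideal U); first by exists U.
have [U' [idU' U'U]] : exists U', [/\ common_ideal U', (U' <= U)%MS &
    ~~ ((U' == 0) || (U <= U')%MS)].
  apply: NNPP => noU'; apply: nminU; split => // U' idU' U'U.
  by apply/negPn/negP => H; apply: noU'; exists U'.
rewrite negb_or => /andP [U'0 UU'].
have rkU' : (\rank U' < k)%N.
  by rewrite -ltnS (leq_trans _ rkU) // ltnS rank_ltmx // ltmxE U'U.
have [V minV VU'] := IH U' rkU' idU' U'0.
by exists V => //; apply: submx_trans VU' U'U.
Qed.

Lemma minimal_ideal_decomposition U : common_ideal U ->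
  exists m (Vs : 'I_m -> 'M[R]_n),
  [/\ (U <= \sum_k Vs k)%MS, (\sum_k Vs k <= U)%MS, forall k, minimal_ideal (Vs k) &
      forall k l, k != l -> (Vs k <= orthm (Vs l))%MS].
Proof.
move: {2}(\rank U).+1 (ltnSn (\rank U)) => k; elim: k U => // k IH U rkU idU.
have [->|U0] := eqVneq U 0.
  by exists 0, (fun=> 0); split => [||[]|[]]; rewrite ?big_ord0 ?sub0mx.
have [V minV VU] := exists_minimal_ideal idU U0; have [V0 idV _] := minV.
pose U' := (U :&: orthm V)%MS.
have idU' : common_ideal U' by apply: common_ideal_cap => //; apply: common_ideal_orthm.
have U'Vo : (U' <= orthm V)%MS by apply: capmxSr.
have rkU' : (\rank U' < k)%N.
  rewrite -ltnS (leq_trans _ rkU) // ltnS rank_ltmx // ltmxE capmxSl /=.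
  apply: contra V0 => UU'; rewrite -submx0 -(capmx_orthm V) sub_capmx submx_refl.
  exact: submx_trans VU (submx_trans UU' U'Vo).
have [m [Vs [sumU' sumVs minVs orthVs]]] := IH U' rkU' idU'.
exists m.+1, (fun k => if unlift ord0 k is Some k' then Vs k' else V).
rewrite big_ord_recl /= unlift_none; under eq_bigr do rewrite liftK.
split.
- apply: submx_trans (addsmxS (submx_refl V) sumU') => /=.
  rewrite /U' capmxC (matrix_modl _ VU) sub_capmx submx_refl andbT.
  exact: submx_trans (submx1 U) (addsmx_orthm V).
- by rewrite addsmx_sub VU (submx_trans sumVs) ?capmxSl.
- by move=> k'; case: unlift.
move=> k1 k2; case: unliftP => [k1' ->|->]; case: unliftP => [k2' ->|->] //=.
- by move=> k12; apply: orthVs; apply: contraNneq k12 => ->.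
- by move=> _; apply: submx_trans (submx_trans _ sumVs) U'Vo; apply: (sumsmx_sup k1').
- move=> _; rewrite orthmC.
  by apply: submx_trans (submx_trans _ sumVs) U'Vo; apply: (sumsmx_sup k2').
Qed.

Lemma bracket_mx_ideal l V : common_ideal V -> (bracket_mx (br l) V <= V)%MS.
Proof. by move=> idV; apply: bracket_mx_sub => x y _ yV; apply: idV. Qed.

Lemma bracket_mx_swap V j l c z :
  br j (c *m bracket_mx (br l) V) z = br l (c *m bracket_mx (br j) V) z.
Proof.
rewrite !mulmx_bracket_mx !(lie_suml (Hlie _)); apply: eq_bigr => k _.
by rewrite !brZl Hcom.
Qed.

Section MinimalIdeal.
Variables (V : 'M[R]_n) (i : 'I_r).
Hypothesis minV : minimal_ideal V.
Hypothesis brV : exists x y, [/\ (x <= V)%MS, (y <= V)%MS & br i x y != 0].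

Let idV : common_ideal V. Proof. by case: minV. Qed.

(* The centralizer of V in (V, br i) is a common ideal by the derivation
   identity [Hder], so minimality leaves only 0 or V, and brV excludes V. *)
Lemma minimal_ideal_centerless z :
  (z <= V)%MS -> (forall y, (y <= V)%MS -> br i z y = 0) -> z = 0.
Proof.
pose P z := (z <= V)%MS /\ forall y, (y <= V)%MS -> br i z y = 0.
have [Z ZP] : exists Z : 'M[R]_n, forall z, (z <= Z)%MS <-> P z.
  apply: linear_pred_rowspace => [|a x y [xV xc] [yV yc]].
    by split=> [|y _]; rewrite ?sub0mx ?br0l.
  split=> [|y' y'V]; first by rewrite addmx_sub ?scalemx_sub.
  by rewrite brDl brZl xc ?yc // scaler0 addr0.
have ZV : (Z <= V)%MS by apply/row_subP => k; have [] := (ZP (row k Z)).1 (row_sub k Z).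
have idZ : common_ideal Z.
  move=> l x y /ZP [yV yc]; apply/ZP; split=> [|y' y'V]; first exact: idV.
  by have := Hder i l x y y'; rewrite yc // br0r yc ?idV // addr0 => <-.
have [_ _ /(_ Z idZ ZV) /orP [/eqP Z0|VZ]] := minV.
  by move=> zV zc; apply/eqP; rewrite -submx0 -Z0; apply/ZP.
by case: brV => x [y [xV yV]]; have [_ -> //] := (ZP x).1 (submx_trans xV VZ); rewrite eqxx.
Qed.

Lemma minimal_ideal_perfect : (V <= bracket_mx (br i) V)%MS.
Proof.
have idV1 : ideal_of 1%:M (br i) V.
  by split=> [|x y xV _]; rewrite ?submx1 // br_anti eqmx_opp idV.
have centerless z : (z <= V)%MS -> (forall y, (y <= 1%:M)%MS -> br i z y = 0) -> z = 0.
  by move=> zV zc; apply: minimal_ideal_centerless => // y _; apply: zc; apply: submx1.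
apply: submx_trans (ideal_perfect (Hlie i) (Hmet i) idV1 centerless) _.
by apply: derived_sub => x y xV yV; apply: bracket_mx_sup.
Qed.

Lemma minimal_ideal_span u : (u <= V)%MS -> exists c, u = c *m bracket_mx (br i) V.
Proof. by move=> uV; apply/submxP; apply: submx_trans uV minimal_ideal_perfect. Qed.

Section Transfer.
Variables (j : 'I_r) (X : 'M[R]_n).
Hypothesis MX : bracket_mx (br i) V *m X = bracket_mx (br j) V.

Lemma transfer_bracket x y : (x <= V)%MS -> (y <= V)%MS -> br i x y *m X = br j x y.
Proof.
move=> xV; move: x xV y.
apply: rowspace_ind => [y _|a x1 x2 IH1 IH2 y yV|k]; first by rewrite !br0l mul0mx.
  by rewrite !brDl !brZl mulmxDl -scalemxAl IH1 ?IH2.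
apply: rowspace_ind => [|a y1 y2 IH1 IH2|l]; first by rewrite !br0r mul0mx.
  by rewrite !brDr !brZr mulmxDl -scalemxAl IH1 IH2.
by have := congr1 (row (enum_rank (k, l))) MX; rewrite row_mul !row_bracket_mx enum_rankK.
Qed.

Lemma transfer_sub u : (u <= V)%MS -> (u *m X <= V)%MS.
Proof.
move=> /minimal_ideal_span [c ->]; rewrite -mulmxA MX.
exact: submx_trans (submxMl _ _) (bracket_mx_ideal j idV).
Qed.

Lemma transfer_adl u z : (u <= V)%MS -> br i (u *m X) z = br j u z.
Proof. by move=> /minimal_ideal_span [c ->]; rewrite -mulmxA MX bracket_mx_swap. Qed.

(* Outside V every bracket with V vanishes, and inside V the action of br l
   is rewritten as that of br i by [bracket_mx_swap]. *)
Lemma transfer_commute l x w : (w <= V)%MS -> br l x w *m X = br l x (w *m X).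
Proof.
move=> wV; have br_iX y : (y <= V)%MS -> br i y w *m X = br i y (w *m X).
  by move=> yV; rewrite transfer_bracket // br_anti -transfer_adl // -br_anti.
have [x1 [x2 [-> x1V x2Vo]]] := orthm_decomp V x.
rewrite !brDl (bracket_orthm0 _ idV x2Vo wV).
rewrite (bracket_orthm0 _ idV x2Vo (transfer_sub wV)) !addr0.
have [c ->] := minimal_ideal_span x1V.
rewrite [br l _ w]bracket_mx_swap [br l _ (w *m X)]bracket_mx_swap br_iX //.
exact: submx_trans (submxMl _ _) (bracket_mx_ideal l idV).
Qed.

Lemma transfer_sym u w : (u <= V)%MS -> (w <= V)%MS -> dot (u *m X) w = dot u (w *m X).
Proof.
move=> /minimal_ideal_span [c ->] wV; rewrite -mulmxA MX !mulmx_bracket_mx !dot_suml.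
apply: eq_bigr => k _; rewrite !dotZl !Hmet -transfer_commute //.
by rewrite transfer_bracket ?row_sub.
Qed.

Lemma transfer_scalar : exists kap : R,
  forall x y, (x <= V)%MS -> (y <= V)%MS -> br j x y = kap *: br i x y.
Proof.
have VX : (V *m X <= V)%MS by apply/row_subP => k; rewrite row_mul transfer_sub ?row_sub.
have [V0 _ minimalV] := minV.
have [kap [v [vV v0 vX]]] := symmetric_eigenvector VX transfer_sym V0.
pose P w := (w <= V)%MS /\ w *m X = kap *: w.
have [E EP] : exists E : 'M[R]_n, forall w, (w <= E)%MS <-> P w.
  apply: linear_pred_rowspace => [|a x y [xV xX] [yV yX]].
    by split; rewrite ?sub0mx ?mul0mx ?scaler0.
  split; first by rewrite addmx_sub ?scalemx_sub.
  by rewrite mulmxDl -scalemxAl xX yX scalerA mulrC -scalerA scalerDr.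
have EV : (E <= V)%MS by apply/row_subP => k; have [] := (EP (row k E)).1 (row_sub k E).
have idE : common_ideal E.
  move=> l x w /EP [wV wX]; apply/EP; split; first exact: idV.
  by rewrite transfer_commute // wX brZr.
case/orP: (minimalV E idE EV) => [/eqP E0|VE].
  by case/eqP: v0; apply/eqP; rewrite -submx0 -E0; apply/EP.
exists kap => x y xV yV; rewrite -transfer_bracket //.
by have [_ ->] := (EP _).1 (submx_trans (idV i x yV) VE).
Qed.

End Transfer.

(* Schur's lemma: [x, y]_i |-> [x, y]_j extends to a linear map X on V, well
   defined because its kernel is central, and X is a scalar. *)
Lemma minimal_ideal_proportional : exists kap : 'I_r -> R,
  forall j x y, (x <= V)%MS -> (y <= V)%MS -> br j x y = kap j *: br i x y.
Proof.
suff /fin_all_exists [kap kapP] : forall j, exists c : R,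
    forall x y, (x <= V)%MS -> (y <= V)%MS -> br j x y = c *: br i x y.
  by exists kap.
move=> j; have [X MX] : exists X, bracket_mx (br i) V *m X = bracket_mx (br j) V.
  apply: solve_mulmx => c ci0; apply: minimal_ideal_centerless => [|y yV].
    exact: submx_trans (submxMl _ _) (bracket_mx_ideal j idV).
  by rewrite bracket_mx_swap ci0 br0l.
exact: transfer_scalar MX.
Qed.

End MinimalIdeal.

Lemma exists_center : exists Z : 'M[R]_n, forall z, (z <= Z)%MS <-> forall i y, br i z y = 0.
Proof.
apply: linear_pred_rowspace => [i y|a x y xc yc i z]; first by rewrite br0l.
by rewrite brDl brZl xc yc scaler0 addr0.
Qed.

Section Center.
Variable Z : 'M[R]_n.
Hypothesis Zcenter : forall z, (z <= Z)%MS <-> forall i y, br i z y = 0.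

Lemma center_common_ideal : common_ideal Z.
Proof.
by move=> i x z /Zcenter zc; apply/Zcenter => j y; rewrite [br i x z]br_anti zc oppr0 br0l.
Qed.

Lemma minimal_ideal_bracket_neq0 V : minimal_ideal V -> (V <= orthm Z)%MS ->
  exists i x y, [/\ (x <= V)%MS, (y <= V)%MS & br i x y != 0].
Proof.
case=> V0 idV _ VZo; apply: NNPP => brV0; move/negP: V0; apply.
rewrite -submx0 -(capmx_orthm Z) sub_capmx VZo andbT; apply/row_subP => k.
apply/Zcenter => i y; have [y1 [y2 [-> y1V y2Vo]]] := orthm_decomp V y.
rewrite brDr [br i _ y2]br_anti (bracket_orthm0 _ idV y2Vo (row_sub k V)) oppr0 addr0.
apply: NNPP => brk; apply: brV0; exists i, (row k V), y1.
by split; rewrite ?row_sub //; apply/eqP.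
Qed.

Section Decomposition.
Variables (m : nat) (Vs : 'I_m -> 'M[R]_n) (idx : 'I_m -> 'I_r).
Hypothesis sumVs : (\sum_k Vs k :=: orthm Z)%MS.
Hypothesis orthVs : forall k l, k != l -> (Vs k <= orthm (Vs l))%MS.
Hypothesis minVs : forall k, minimal_ideal (Vs k).

Definition component (a : option 'I_m) := if a is Some k then Vs k else Z.

Lemma component_full : (\sum_a component a == 1%:M)%MS.
Proof.
rewrite submx1 /=; apply: submx_trans (addsmx_orthm Z) _.
rewrite addsmx_sub (sumsmx_sup None) //= -sumVs.
by apply/sumsmx_subP => k _; apply: (sumsmx_sup (Some k)).
Qed.

Lemma component_orthm a c : a != c -> (component a <= orthm (component c))%MS.
Proof.
have VsZo k : (Vs k <= orthm Z)%MS by rewrite -sumVs (sumsmx_sup k).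
case: a c => [k|] [l|] //= ac; last by rewrite orthmC.
by apply: orthVs; apply: contraNneq ac => ->.
Qed.

Hypothesis brVs : forall k,
  exists x y, [/\ (x <= Vs k)%MS, (y <= Vs k)%MS & br (idx k) x y != 0].

Let ideal_idx k x y : (y <= Vs k)%MS -> (br (idx k) x y <= Vs k)%MS.
Proof. by case: (minVs k) => _ idV _; apply: idV. Qed.
Let lie_idx k : is_lie_bracket (br (idx k)). Proof. exact: Hlie. Qed.
Let met_idx k : is_metric (br (idx k)). Proof. exact: Hmet. Qed.

Local Notation b0 := (sum_bracket Vs (fun k => br (idx k))).

Lemma component_semisimple : semisimple_on (\sum_k Vs k)%MS b0.
Proof.
apply: (sum_bracket_semisimple lie_idx met_idx ideal_idx orthVs) => k.
exact: minimal_ideal_centerless (minVs k) (brVs k).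
Qed.

Lemma component_ideal k : ideal_of (\sum_k Vs k)%MS b0 (Vs k).
Proof. exact: (sum_bracket_ideal lie_idx ideal_idx orthVs). Qed.

Variable kap : 'I_m -> 'I_r -> R.
Hypothesis kapP : forall k j x y, (x <= Vs k)%MS -> (y <= Vs k)%MS ->
  br j x y = kap k j *: br (idx k) x y.

Lemma component_bracket i :
  [/\ forall x y, (x <= component None)%MS -> (y <= component None)%MS -> br i x y = 0,
      forall k x y, (x <= component (Some k))%MS -> (y <= component (Some k))%MS ->
        br i x y = kap k i *: b0 x y &
      forall a c, a != c -> forall x y, (x <= component a)%MS -> (y <= component c)%MS ->
        br i x y = 0].
Proof.
split=> [x y /Zcenter xc _|k x y xV yV|a c ac x y xa]; first exact: xc.
  by rewrite (kapP i xV yV) (sum_bracket_in lie_idx orthVs xV yV).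
case: c ac => [l|] ac yc; last by move/Zcenter: yc => yc; rewrite br_anti yc oppr0.
have [_ idVl _] := minVs l.
by apply: (bracket_orthm0 _ idVl _ yc); apply: submx_trans xa (component_orthm ac).
Qed.

End Decomposition.

End Center.

End CompatibleBrackets.

Theorem mainTheorem4 (R : realType) (n r : nat)
  (br : 'I_r -> 'rV[R]_n -> 'rV[R]_n -> 'rV[R]_n)
  (Hlie : forall i, is_lie_bracket (br i))
  (Hmet : forall i, is_metric (br i))
  (Hder : forall (i j : 'I_r) (x y z : 'rV[R]_n),
     br j x (br i y z) = br i (br j x y) z + br i y (br j x z))
  (Hcom : forall (i j : 'I_r) (x y z : 'rV[R]_n),
     br j (br i x y) z = br i (br j x y) z) :
  exists (N : nat) (W : option 'I_N -> 'M[R]_n)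
         (b0 : 'rV[R]_n -> 'rV[R]_n -> 'rV[R]_n) (kappa : 'I_r -> 'I_N -> R),
    [/\ (\sum_(a : option 'I_N) W a == 1%:M)%MS,
        (forall a c : option 'I_N, a != c -> forall x y : 'rV[R]_n,
            (x <= W a)%MS -> (y <= W c)%MS -> dot x y = 0),
        semisimple_on (\sum_(al : 'I_N) W (Some al))%MS b0,
        (forall al : 'I_N, ideal_of (\sum_(be : 'I_N) W (Some be))%MS b0 (W (Some al))) &
        (forall i : 'I_r,
          [/\ (forall x y, (x <= W None)%MS -> (y <= W None)%MS -> br i x y = 0),
              (forall al : 'I_N, forall x y, (x <= W (Some al))%MS -> (y <= W (Some al))%MS ->
                  br i x y = kappa i al *: b0 x y) &
              (forall a c : option 'I_N, a != c -> forall x y,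
                  (x <= W a)%MS -> (y <= W c)%MS -> br i x y = 0)])].
Proof.
have [Z Zcenter] := exists_center Hlie.
have idZo := common_ideal_orthm Hlie Hmet (center_common_ideal Hlie Zcenter).
have [m [Vs [ZoVs VsZo minVs orthVs]]] := minimal_ideal_decomposition Hlie Hmet idZo.
have sumVs : (\sum_k Vs k :=: orthm Z)%MS by apply/eqmxP; rewrite ZoVs VsZo.
have VsZo' k : (Vs k <= orthm Z)%MS by rewrite -sumVs (sumsmx_sup k).
have /fin_all_exists [idx brVs] :=
  fun k => minimal_ideal_bracket_neq0 Hlie Hmet Zcenter (minVs k) (VsZo' k).
have /fin_all_exists [kap kapP] :=
  fun k => minimal_ideal_proportional Hlie Hmet Hder Hcom (minVs k) (brVs k).
exists m, (component Z Vs), (sum_bracket Vs (fun k => br (idx k))), (fun i k => kap k i).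
split.
- exact: component_full.
- move=> a c ac x y xa.
  by move/orthmP: (submx_trans xa (component_orthm sumVs orthVs ac)); apply.
- exact: component_semisimple.
- exact: component_ideal.
- exact: (component_bracket Hlie Hmet Zcenter sumVs orthVs minVs kapP).
Qed.
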